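(* Let $\varphi(x)=a_nx^n+\cdots+a_0\in\mathbb{C}[x]$, $a_n\ne0$, have $n$ distinct roots $x_1,\dots,x_n$, let $R\subset\mathbb{C}(x)$ be the subring of rational functions defined at all roots of $\varphi$, and let $h\in R$. If $r(x)=b_{n-1}x^{n-1}+\cdots+b_0$ is the unique polynomial of degree $<n$ representing the coset of $\varphi'(x)h(x)$ in $R/(\varphi)$, then $\sum_{i=1}^nh(x_i)=\dfrac{b_{n-1}}{a_n}$.
   Context: $(\varphi)$ denotes the ideal generated by $\varphi$ in $R$; $R/(\varphi)\cong\mathbb{C}[x]/(\varphi)$. *)

From HB Require Import structures.
From mathcomp Require Import all_boot all_order all_algebra.
From Stdlib Require Import ClassicalEpsilon.
Set Implicit Arguments. Unset Strict Implicit. Unset Printing Implicit Defensive.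
Import Order.TTheory GRing.Theory Num.Theory.
Local Open Scope ring_scope.
Notation "x %:F" := (@FracField.tofrac _ x) : ring_scope.

Definition ratfun (F : fieldType) := {fraction {poly F}}.

Definition ratf_defined_at (F : fieldType) (h : ratfun F) (a : F) : Prop :=
  exists p q : {poly F}, q.[a] != 0 /\ h = p%:F / q%:F.

Definition in_R (F : fieldType) (phi : {poly F}) (h : ratfun F) : Prop :=
  exists p q : {poly F}, (forall a, root phi a -> q.[a] != 0) /\ h = p%:F / q%:F.

(* Value h(a) := p(a)/q(a) for a representation h = p/q with q(a) <> 0
   (well defined; the choice of representation is made by epsilon). *)
Definition ratf_eval (F : fieldType) (h : ratfun F) (a : F) : F :=
  let pq := epsilon (inhabits ((0 : {poly F}), (1 : {poly F})))
              (fun pq : {poly F} * {poly F} =>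
                 pq.2.[a] != 0 /\ h = pq.1%:F / pq.2%:F) in
  pq.1.[a] / pq.2.[a].

(* Write phi = a * prod_i (X - x_i).  Evaluating the congruence
   phi' h = r (mod phi) at a root x_i gives h(x_i) = r(x_i) / phi'(x_i), and
   phi'(x_i) = a * prod_(j <> i) (x_i - x_j).  By Lagrange interpolation on the
   n nodes x_i, the coefficient of X^(n-1) of a polynomial r of degree < n is
   sum_i r(x_i) / prod_(j <> i) (x_i - x_j), which yields the identity. *)
From HB Require Import structures.
From mathcomp Require Import all_boot all_order all_algebra.
From mathcomp Require Import ring.
From Stdlib Require Import ClassicalEpsilon.
Import Order.TTheory GRing.Theory Num.Theory.
Set Implicit Arguments. Unset Strict Implicit. Unset Printing Implicit Defensive.
Local Open Scope ring_scope.

Section RatfunEvaluation.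
Variable F : fieldType.
Implicit Types (p q A R phi : {poly F}) (h g : ratfun F) (a : F).

Lemma horner_neq0_poly p a : p.[a] != 0 -> p != 0.
Proof. by apply: contraNneq => ->; rewrite horner0. Qed.

Lemma tofrac_div_eq p q p' q' : q != 0 -> q' != 0 ->
  p%:F / q%:F = p'%:F / q'%:F -> p * q' = p' * q.
Proof.
move=> q_neq0 q'_neq0 /eqP; rewrite eqr_div ?tofrac_eq0 // -!tofracM tofrac_eq.
by move/eqP.
Qed.

Lemma ratf_evalE h a p q : q.[a] != 0 -> h = p%:F / q%:F ->
  ratf_eval h a = p.[a] / q.[a].
Proof.
move=> qa_neq0 hE; rewrite /ratf_eval.
set P := (fun pq : {poly F} * {poly F} => _).
have [] : P (epsilon (inhabits (0, 1)) P) by apply: epsilon_spec; exists (p, q).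
move: (epsilon _ P) => [p1 q1] /= q1a_neq0 h1E.
have := tofrac_div_eq (horner_neq0_poly q1a_neq0) (horner_neq0_poly qa_neq0)
  (etrans (esym h1E) hE).
move/(congr1 (horner^~ a)); rewrite !hornerM => E.
by apply/eqP; rewrite eqr_div // E.
Qed.

Lemma in_R_defined_at phi h a : in_R phi h -> root phi a -> ratf_defined_at h a.
Proof. by move=> [p [q [q_roots hE]]] phi_a; exists p, q; split; first exact: q_roots. Qed.

Lemma ratf_eval_root_congr phi A R h g a :
  root phi a -> A.[a] != 0 -> ratf_defined_at h a -> ratf_defined_at g a ->
  A%:F * h - R%:F = phi%:F * g -> ratf_eval h a = R.[a] / A.[a].
Proof.
move=> /eqP phi_a Aa_neq0 [p [q [qa_neq0 hE]]] [p' [q' [q'a_neq0 gE]]] congr.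
have q_neq0 := horner_neq0_poly qa_neq0; have q'_neq0 := horner_neq0_poly q'a_neq0.
have cleared : A * p * q' - R * q * q' = phi * p' * q.
  apply/eqP; rewrite -tofrac_eq !(tofracB, tofracM).
  have qF_neq0 : q%:F != 0 by rewrite tofrac_eq0.
  have q'F_neq0 : q'%:F != 0 by rewrite tofrac_eq0.
  rewrite -[p%:F](divfK qF_neq0) -[p'%:F](divfK q'F_neq0) -hE -gE.
  apply/eqP; transitivity ((A%:F * h - R%:F) * q%:F * q'%:F); first by ring.
  by rewrite congr; ring.
move/(congr1 (horner^~ a)): cleared.
rewrite !(hornerD, hornerN, hornerM) phi_a !mul0r => /eqP; rewrite subr_eq0 => /eqP E.
rewrite (ratf_evalE qa_neq0 hE); apply/eqP; rewrite eqr_div //; apply/eqP.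
by apply: (mulIf q'a_neq0); rewrite [p.[a] * _]mulrC E.
Qed.

End RatfunEvaluation.

Section LagrangeInterpolation.
Variables (F : fieldType) (n : nat) (x : 'I_n -> F).
Hypothesis x_inj : injective x.

Definition nodal_poly := \prod_(j < n) ('X - (x j)%:P).
Definition lagrange_numer i := \prod_(j | j != i) ('X - (x j)%:P).

Lemma size_prod_XsubC_nodes (P : pred 'I_n) :
  size (\prod_(j | P j) ('X - (x j)%:P)) = #|P|.+1.
Proof.
rewrite size_prod; last by move=> j _; rewrite polyXsubC_eq0.
under eq_bigr do rewrite size_XsubC.
by rewrite sum_nat_const muln2 -addnn -addSn addnK.
Qed.

Lemma size_nodal_poly : size nodal_poly = n.+1.
Proof. by rewrite size_prod_XsubC_nodes card_ord. Qed.

Lemma size_lagrange_numer i : size (lagrange_numer i) = n.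
Proof.
by rewrite size_prod_XsubC_nodes cardC1 card_ord prednK // (leq_ltn_trans _ (ltn_ord i)).
Qed.

Lemma monic_nodal_poly : nodal_poly \is monic.
Proof. exact: monic_prod_XsubC. Qed.

Lemma monic_lagrange_numer i : lagrange_numer i \is monic.
Proof. exact: monic_prod_XsubC. Qed.

Lemma nodal_poly_split i : nodal_poly = ('X - (x i)%:P) * lagrange_numer i.
Proof. by rewrite /nodal_poly (bigD1 i). Qed.

Lemma root_nodal_poly i : root nodal_poly (x i).
Proof. by rewrite (nodal_poly_split i) rootM root_XsubC eqxx. Qed.

Lemma root_lagrange_numer i k : k != i -> root (lagrange_numer i) (x k).
Proof.
by move=> ki; rewrite /root horner_prod (bigD1 k) //= hornerXsubC subrr mul0r.
Qed.

Lemma lagrange_numer_node_neq0 i : (lagrange_numer i).[x i] != 0.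
Proof.
rewrite horner_prod; apply/prodf_neq0 => j ji.
by rewrite hornerXsubC subr_eq0; apply: contra ji => /eqP /x_inj ->.
Qed.

Lemma horner_deriv_nodal_poly i : nodal_poly^`().[x i] = (lagrange_numer i).[x i].
Proof.
rewrite (nodal_poly_split i) derivM derivXsubC hornerD !hornerM hornerXsubC.
by rewrite subrr mul0r addr0 hornerC mul1r.
Qed.

Lemma poly_eq0_at_nodes (p : {poly F}) :
  (size p <= n)%N -> (forall i, root p (x i)) -> p = 0.
Proof.
move=> size_p p_roots; apply: (@roots_geq_poly_eq0 _ _ (map x (enum 'I_n))).
- by apply/allP => y /mapP [i _ ->].
- by rewrite map_inj_uniq // enum_uniq.
- by rewrite size_map size_enum_ord.
Qed.

Lemma lagrange_interpolation (r : {poly F}) : (size r <= n)%N ->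
  r = \sum_i (r.[x i] / (lagrange_numer i).[x i]) *: lagrange_numer i.
Proof.
move=> size_r; apply/eqP; rewrite -subr_eq0; apply/eqP/poly_eq0_at_nodes => [|k].
  rewrite (leq_trans (size_polyD _ _)) // geq_max size_r size_polyN.
  apply: (big_ind (fun p : {poly F} => size p <= n)%N) => [|p q sp sq|i _].
  - by rewrite size_poly0.
  - by rewrite (leq_trans (size_polyD _ _)) // geq_max sp.
  - by rewrite (leq_trans (size_scale_leq _ _)) // size_lagrange_numer.
rewrite /root hornerD hornerN horner_sum (bigD1 k) //= hornerZ.
rewrite divfK ?lagrange_numer_node_neq0 // big1 ?addr0 ?subrr // => i ik.
by rewrite hornerZ (eqP (@root_lagrange_numer i k _)) ?mulr0 // eq_sym.
Qed.

Lemma coef_lagrange_interpolation (r : {poly F}) : (size r <= n)%N ->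
  r`_n.-1 = \sum_i r.[x i] / (lagrange_numer i).[x i].
Proof.
move=> size_r; rewrite {1}(lagrange_interpolation size_r) coef_sum.
apply: eq_bigr => i _; move: (monic_lagrange_numer i).
by rewrite coefZ qualifE /= lead_coefE size_lagrange_numer => /eqP ->; rewrite mulr1.
Qed.

Lemma eq_scale_nodal_poly (phi : {poly F}) :
  size phi = n.+1 -> (forall i, root phi (x i)) -> phi = lead_coef phi *: nodal_poly.
Proof.
move=> size_phi phi_roots; apply/eqP; rewrite -subr_eq0; apply/eqP/poly_eq0_at_nodes.
  apply/leq_sizeP => j; rewrite leq_eqVlt => /predU1P [<- | ltnj].
    move: monic_nodal_poly; rewrite coefB coefZ qualifE /= !lead_coefE size_phi.
    by rewrite size_nodal_poly => /eqP ->; rewrite mulr1 subrr.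
  by rewrite coefB coefZ !nth_default ?mulr0 ?subrr ?size_nodal_poly ?size_phi.
move=> i; rewrite rootE hornerD hornerN hornerZ (eqP (phi_roots i)).
by rewrite (eqP (root_nodal_poly i)) mulr0 subrr.
Qed.

End LagrangeInterpolation.

Theorem corollary9p3 (C : numClosedFieldType) (n : nat) (phi : {poly C})
    (x : 'I_n -> C) (h : ratfun C) (r : {poly C}) :
  (0 < n)%N ->
  size phi = n.+1 ->
  injective x ->
  (forall i, root phi (x i)) ->
  in_R phi h ->
  (size r <= n)%N ->
  (exists g : ratfun C, in_R phi g /\ (phi^`())%:F * h - r%:F = phi%:F * g) ->
  \sum_(i < n) ratf_eval h (x i) = r`_n.-1 / lead_coef phi.
Proof.
move=> _ size_phi x_inj phi_roots h_in_R size_r [g [g_in_R congr]].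
have lead_neq0 : lead_coef phi != 0.
  by rewrite lead_coef_eq0 -size_poly_eq0 size_phi.
have deriv_phi_node i : phi^`().[x i] = lead_coef phi * (lagrange_numer x i).[x i].
  rewrite {1}(eq_scale_nodal_poly x_inj size_phi phi_roots) derivZ hornerZ.
  by rewrite horner_deriv_nodal_poly.
have h_node i : ratf_eval h (x i) = r.[x i] / phi^`().[x i].
  apply: (ratf_eval_root_congr (phi_roots i) _ _ _ congr).
  - by rewrite deriv_phi_node mulf_neq0 ?(lagrange_numer_node_neq0 x_inj).
  - exact: in_R_defined_at (phi_roots i).
  - exact: in_R_defined_at (phi_roots i).
rewrite (coef_lagrange_interpolation x_inj size_r) mulr_suml; apply: eq_bigr => i _.
by rewrite h_node deriv_phi_node [lead_coef phi * _]mulrC invfM mulrA.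
Qed.
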